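(* Let $(S,d)$ be a finite metric space partitioned into two disjoint groups $S=S_1\cup S_2$, let $k_1,k_2$ be nonnegative integers with $k=k_1+k_2$, and let $r^*$ be the optimal radius of the fair $k$-center problem. For $l\in\{1,2\}$ let $\Gamma_l\subseteq S_l$ be a $2r^*$-independent center set of $S_l$, with $|\Gamma_1|>k_1$ and $|\Gamma_2|>k_2$. Then Algorithm A (described in the context), run on $\Gamma_1,\Gamma_2$, terminates in time $O(k^2)$ and outputs a set $C$ that is a feasible solution to the fair $k$-center problem (i.e. $|C\cap S_l|\le k_l$ for $l=1,2$ and $|C|\le k$) with $d(s,C)\le 5r^*$ for every $s\in S$.
   Context: Fair $k$-center: $C\subseteq S$ is feasible if $|C\cap S_l|\le k_l$ for each $l$; cost $\max_{s\in S}d(s,C)$, $d(s,C)=\min_{c\in C}d(s,c)$, $d(s,\emptyset)=\infty$; $r^*$ is the minimum cost over feasible $C$. For $T\subseteq S$, $\Gamma\subseteq T$ is a $\lambda$-independent center set of $T$ if distinct points of $\Gamma$ are at distance $>\lambda$ and every point of $T$ is within $\lambda$ of some point of $\Gamma$. Running time counts elementary operations and distance evaluations. Algorithm A (input $\Gamma_1,\Gamma_2$). Phase 1: $C\leftarrow\emptyset$; build the bipartite graph $G$ on vertex set $\Gamma_1\cup\Gamma_2$ where $p\in\Gamma_1$, $q\in\Gamma_2$ are adjacent iff $d(p,q)\le 3r^*$; for each degree-$0$ vertex $i$, if $d(C,i)>2r^*$ add $i$ to $C$; remove all degree-$0$ vertices from $G$ (throughout, the current $\Gamma_l$ means the vertices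 of $G$ that lie in the original $\Gamma_l$). Phase 2: while $|C|\le k$ and $G$ is nonempty: if $G$ has no vertex of degree $1$, pick an arbitrary edge, let $p$ be one of its endpoints (arbitrary) and $q$ the other, add $p$ to $C$ and delete $p$ and $q$ from $G$; otherwise, pick a vertex $i$ of $G$ maximizing $|N_1(i)|$, where $N_1(i)$ is the set of degree-$1$ neighbours of $i$ in $G$, add $i$ to $C$ and delete $i$ and $N_1(i)$ from $G$. Then, if some $l\in\{1,2\}$ satisfies $|C\cap S_l|+|\Gamma_l|\le k_l$ (current $\Gamma_l$), set $C\leftarrow C\cup\Gamma_l$, let $\Gamma'_{3-l}=\{p\in\Gamma_{3-l}: d(p,C)>3r^*\}$ (current $\Gamma_{3-l}$), and return $C\cup\Gamma'_{3-l}$. If the loop ends without returning, output $C$. *)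

From HB Require Import structures.
From mathcomp Require Import all_boot all_order all_algebra.
From mathcomp Require Import reals.
Set Implicit Arguments. Unset Strict Implicit. Unset Printing Implicit Defensive.
Import Order.TTheory GRing.Theory Num.Theory.
Local Open Scope ring_scope.

Section FairKCenter.
Variables (R : realType) (T : finType) (d : T -> T -> R).

(* (T, d) is a (finite) metric space; the whole point set S is T. *)
Definition is_metric : Prop :=
  [/\ forall x y, 0 <= d x y,
      forall x y, d x y = 0 <-> x = y,
      forall x y, d x y = d y x
    & forall x y z, d x z <= d x y + d y z].

(* d(s, C) <= rho for every s in S  (with d(s, emptyset) = +oo),
   i.e. the k-center cost max_s d(s,C) of C is at most rho. *)
Definition covers (C : {set T}) (rho : R) : Prop :=
  forall s : T, exists2 c, c \in C & d s c <= rho.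

Variables (S1 S2 : {set T}) (k1 k2 : nat).

Definition fair_feasible (C : {set T}) : Prop :=
  (#|C :&: S1| <= k1)%N /\ (#|C :&: S2| <= k2)%N.

Definition opt_radius (r : R) : Prop :=
  (exists C, fair_feasible C /\ covers C r) /\
  (forall C r', fair_feasible C -> covers C r' -> r <= r').

End FairKCenter.

Definition indep_center_set (R : realType) (T : finType) (d : T -> T -> R)
    (lambda : R) (X Gam : {set T}) : Prop :=
  [/\ Gam \subset X,
      (forall p q, p \in Gam -> q \in Gam -> p != q -> lambda < d p q)
    & (forall x, x \in X -> exists2 p, p \in Gam & d x p <= lambda)].

(* Algorithm A as a nondeterministic small-step machine, with a cost
   counter (elementary operations + distance evaluations). *)

Inductive astate (T : finType) :=
  | Ph1 of {set T} & {set T} & nat   (* C, degree-0 vertices still to process, cost *)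
  | Ph2 of {set T} & {set T} & nat   (* C, vertex set of current graph G, cost *)
  | Done of {set T} & nat.           (* output, cost *)

Section AlgA.
Variables (R : realType) (T : finType) (d : T -> T -> R).
Variables (S1 S2 : {set T}) (k1 k2 : nat) (r : R) (G1 G2 : {set T}).

Definition Sg (l : bool) := if l then S1 else S2.
Definition Gam (l : bool) := if l then G1 else G2.
Definition kk (l : bool) := if l then k1 else k2.

Definition adj (p q : T) : bool :=
  ((p \in G1) && (q \in G2) || (p \in G2) && (q \in G1)) && (d p q <= 3 * r).

(* the current graph G is the subgraph induced by its vertex set V *)
Definition nbr (V : {set T}) (v : T) : {set T} := [set u in V | adj v u].
Definition deg1 (V : {set T}) : {set T} := [set v in V | #|nbr V v| == 1%N].
Definition N1 (V : {set T}) (i : T) : {set T} := nbr V i :&: deg1 V.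
Definition inc_edges (V X : {set T}) : nat :=
  #|[set e : T * T | [&& e.1 \in X, e.1 \in V, e.2 \in V & adj e.1 e.2]]|.

Definition V0 : {set T} := G1 :|: G2.
Definition Z0 : {set T} := [set v in V0 | nbr V0 v == set0].

Definition algA_init : astate T :=
  Ph1 set0 Z0 (#|G1| * #|G2| + #|V0| + 1)%N.

(* one iteration of the body of the Phase 2 loop: (C,V) -> (C',V') at cost m *)
Inductive body : {set T} -> {set T} -> {set T} -> {set T} -> nat -> Prop :=
  | body_edge (C V : {set T}) (p q : T) :
      deg1 V = set0 -> p \in V -> q \in V -> adj p q ->
      body C V (p |: C) (V :\: [set p; q]) (1 + inc_edges V [set p; q])%N
  | body_deg1 (C V : {set T}) (i : T) :
      deg1 V != set0 -> i \in V ->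
      (forall j, j \in V -> #|N1 V j| <= #|N1 V i|)%N ->
      body C V (i |: C) (V :\: (i |: N1 V i)) (1 + inc_edges V (i |: N1 V i))%N.

Definition ret_cond (C V : {set T}) (l : bool) : bool :=
  (#|C :&: Sg l| + #|V :&: Gam l| <= kk l)%N.

(* the returned set C u Gamma_l u Gamma'_{3-l} *)
Definition ret_set (C V : {set T}) (l : bool) : {set T} :=
  let C' := C :|: (V :&: Gam l) in
  C' :|: [set p in V :&: Gam (~~ l) | [forall c in C', 3 * r < d p c]].

Inductive algA_step : astate T -> astate T -> Prop :=
  | ph1_add (C P : {set T}) (n : nat) (i : T) :
      i \in P -> [forall c in C, 2 * r < d c i] ->
      algA_step (Ph1 C P n) (Ph1 (i |: C) (P :\ i) (n + #|C| + 1))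
  | ph1_skip (C P : {set T}) (n : nat) (i : T) :
      i \in P -> ~~ [forall c in C, 2 * r < d c i] ->
      algA_step (Ph1 C P n) (Ph1 C (P :\ i) (n + #|C| + 1))
  | ph1_end (C : {set T}) (n : nat) :
      algA_step (Ph1 C set0 n) (Ph2 C (V0 :\: Z0) (n + #|V0| + 1))
  | ph2_stop (C V : {set T}) (n : nat) :
      ~~ ((#|C| <= k1 + k2)%N && (V != set0)) ->
      algA_step (Ph2 C V n) (Done C (n + 1))
  | ph2_return (C V : {set T}) (n : nat) (C' V' : {set T}) (m : nat) (l : bool) :
      (#|C| <= k1 + k2)%N -> V != set0 -> body C V C' V' m ->
      ret_cond C' V' l ->
      algA_step (Ph2 C V n)
        (Done (ret_set C' V' l) (n + m + 1 + #|V'| * (#|C'| + #|V'| + 1)))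
  | ph2_continue (C V : {set T}) (n : nat) (C' V' : {set T}) (m : nat) :
      (#|C| <= k1 + k2)%N -> V != set0 -> body C V C' V' m ->
      ~~ ret_cond C' V' true -> ~~ ret_cond C' V' false ->
      algA_step (Ph2 C V n) (Ph2 C' V' (n + m + 1)).

End AlgA.

Inductive algA_reach (A : Type) (step : A -> A -> Prop) : A -> A -> Prop :=
  | reach_refl s : algA_reach step s s
  | reach_step s t u : step s t -> algA_reach step t u -> algA_reach step s u.

From HB Require Import structures.
From mathcomp Require Import all_boot all_order all_algebra.
From mathcomp Require Import reals.
From mathcomp Require Import lra zify.
From Stdlib Require Import Wf_nat.
Set Implicit Arguments. Unset Strict Implicit. Unset Printing Implicit Defensive.
Import Order.TTheory GRing.Theory Num.Theory.

(* Fix an optimal fair solution C*. Two distinct points of Gamma_1 :|: Gamma_2 at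
   distance at most 2r lie in different Gamma_l (each Gamma_l is 2r-independent), so
   they are adjacent in G. Hence sending each point to a centre of C* within r is
   injective on Gamma_l together with the set Z of isolated vertices: |Z :|: Gamma_l| <= k.
   Phase 1 puts Z into C. Phase 2 keeps G free of isolated vertices (G is bipartite,
   hence triangle-free, so neither kind of deletion isolates a remaining vertex), and each
   iteration adds one centre and deletes both ends of an edge, i.e. a vertex of each
   Gamma_l; so |C| + |Gamma_l| <= k persists, and every deleted vertex is within 3r of C.
   The loop cannot run out of vertices: with G empty, both failed return tests would give
   |C :&: S_l| > k_l for both l. When the test succeeds for l, every vertex of
   Gamma_(3-l) left in G has a neighbour in Gamma_l, so Gamma'_(3-l) is empty and the
   output C :|: Gamma_l is feasible and within 3r of Gamma_1 :|: Gamma_2, hence within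
   5r of S. *)

Lemma card_setD_lt (T : finType) (A B : {set T}) x :
  x \in A -> x \in B -> (#|A :\: B| < #|A|)%N.
Proof.
move=> xA xB; rewrite cardsD ltn_subrL !card_gt0; apply/andP; split.
  by apply/set0Pn; exists x; rewrite inE xA.
by apply/set0Pn; exists x.
Qed.

Lemma card_setU1I_le (T : finType) (x : T) (C A : {set T}) : (#|(x |: C) :&: A| <= #|C :&: A| + 1)%N.
Proof.
rewrite setIUl (leq_trans (leq_card_setU _ _).1) // addnC leq_add2l.
by rewrite (leq_trans (subset_leq_card (subsetIl _ _))) ?cards1.
Qed.

Section AlgorithmA.
Variables (R : realType) (T : finType) (d : T -> T -> R)
  (S1 S2 : {set T}) (k1 k2 : nat) (r : R) (G1 G2 : {set T}).

(* Groups are indexed by l : bool, true for 1 and false for 2, so ~~ l is 3 - l. *)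
Local Notation K := (k1 + k2)%N.
Local Notation Sl := (Sg S1 S2).
Local Notation Gm := (Gam G1 G2).
Local Notation kl := (kk k1 k2).
Local Notation W := (V0 G1 G2).
Local Notation Z := (Z0 d r G1 G2).
Local Notation adjG := (adj d r G1 G2).
Local Notation nbrG := (nbr d r G1 G2).
Local Notation deg1G := (deg1 d r G1 G2).
Local Notation N1G := (N1 d r G1 G2).
Local Notation bodyG := (body d r G1 G2).
Local Notation ret_condG := (ret_cond S1 S2 k1 k2 G1 G2).

Lemma in_nbr V v u : (u \in nbrG V v) = (u \in V) && adjG v u.
Proof. by rewrite inE. Qed.

Lemma in_deg1 V v : (v \in deg1G V) = (v \in V) && (#|nbrG V v| == 1%N).
Proof. by rewrite inE. Qed.

Lemma in_N1 V i u : (u \in N1G V i) = (u \in nbrG V i) && (u \in deg1G V).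
Proof. by rewrite inE. Qed.

Lemma inc_edges_le V X : (inc_edges d r G1 G2 V X <= #|V :&: X| * #|V|)%N.
Proof.
rewrite -cardsX; apply: subset_leq_card; apply/subsetP => -[u v].
by rewrite !inE /= => /and4P[-> -> -> _].
Qed.

Lemma body_card_lt C V C' V' m : bodyG C V C' V' m -> (#|V'| < #|V|)%N.
Proof.
case=> {C V C' V' m} [C V p q _ pV _ _ | C V i _ iV _].
- by apply: (card_setD_lt pV); rewrite !inE eqxx.
- by apply: (card_setD_lt iV); rewrite setU11.
Qed.

Definition state_size (st : astate T) : nat :=
  match st with
  | Ph1 _ P _ => #|P| + #|T| + 2
  | Ph2 _ V _ => #|V| + 1
  | Done _ _ => 0
  end.

Lemma step_size_lt s t :
  algA_step d S1 S2 k1 k2 r G1 G2 s t -> (state_size t < state_size s)%N.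
Proof.
case=> {s t} /=; try lia.
- by move=> C P n i iP _; rewrite (cardsD1 i P) iP; lia.
- by move=> C P n i iP _; rewrite (cardsD1 i P) iP; lia.
- by move=> C n; rewrite cards0 add0n addn1 addn2 !ltnS max_card.
- by move=> C V n C' V' m _ _ /body_card_lt; lia.
Qed.

Lemma algA_acc s : Acc (fun y x => algA_step d S1 S2 k1 k2 r G1 G2 x y) s.
Proof.
by apply: (@well_founded_lt_compat _ state_size) => x y /step_size_lt/ssrnat.ltP.
Qed.

Hypotheses (d_metric : is_metric d)
  (S_disjoint : S1 :&: S2 = set0) (S_cover : S1 :|: S2 = [set: T])
  (r_opt : opt_radius d S1 S2 k1 k2 r)
  (G1_indep : indep_center_set d (2 * r)%R S1 G1)
  (G2_indep : indep_center_set d (2 * r)%R S2 G2)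
  (k1_lt : (k1 < #|G1|)%N) (k2_lt : (k2 < #|G2|)%N).

Lemma d_ge0 x y : (0 <= d x y)%R. Proof. by case: d_metric. Qed.
Lemma d_xx x : d x x = 0%R. Proof. by case: d_metric => _ /(_ x x) [_ ->]. Qed.
Lemma d_sym x y : d x y = d y x. Proof. by case: d_metric. Qed.
Lemma d_triangle x y z : (d x z <= d x y + d y z)%R. Proof. by case: d_metric. Qed.

Lemma setC_Sg l : ~: Sl l = Sl (~~ l).
Proof.
apply/setP => x; move/setP/(_ x): S_disjoint; move/setP/(_ x): S_cover.
by rewrite !inE; case: l => /=; case: (x \in S1); case: (x \in S2).
Qed.

Lemma card_Sg_split l (A : {set T}) :
  #|A| = (#|A :&: Sl l| + #|A :&: Sl (~~ l)|)%N.
Proof. by rewrite -setC_Sg -setDE cardsID. Qed.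

Lemma fair_feasibleP C :
  fair_feasible S1 S2 k1 k2 C <-> forall l, (#|C :&: Sl l| <= kl l)%N.
Proof. by split=> [[? ?] [] // | h]; split; [exact: (h true) | exact: (h false)]. Qed.

Lemma fair_feasible_card C : fair_feasible S1 S2 k1 k2 C -> (#|C| <= K)%N.
Proof. by case=> h1 h2; rewrite (card_Sg_split true C) leq_add. Qed.

Lemma r_ge0 : (0 <= r)%R.
Proof.
have [[C [_ covC]] _] := r_opt.
have /set0Pn [x _] : G1 != set0 by rewrite -card_gt0; apply: leq_ltn_trans k1_lt.
by have [c _ /(le_trans (d_ge0 x c))] := covC x.
Qed.

Lemma Gam_indep l : indep_center_set d (2 * r)%R (Sl l) (Gm l).
Proof. by case: l. Qed.

Lemma kl_lt_card_Gam l : (kl l < #|Gm l|)%N.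
Proof. by case: l. Qed.

Lemma Gam_sub_Sg l x : x \in Gm l -> x \in Sl l.
Proof. by case: (Gam_indep l) => /subsetP sub _ _ /sub. Qed.

Lemma Gam_notin_Sg l x : x \in Gm l -> x \notin Sl (~~ l).
Proof. by move/Gam_sub_Sg; rewrite -setC_Sg inE negbK. Qed.

Lemma Gam_disjoint l x : x \in Gm l -> x \in Gm (~~ l) -> False.
Proof. by move=> /Gam_notin_Sg/negP xS /Gam_sub_Sg. Qed.

Lemma Gam_sub_V0 l x : x \in Gm l -> x \in W.
Proof. by case: l => xG; rewrite inE xG ?orbT. Qed.

Lemma V0_Gam l x : x \in W -> x \notin Gm l -> x \in Gm (~~ l).
Proof. by rewrite inE; case: l => /= /orP[] ->. Qed.

Lemma V0_Sg l : W :&: Sl l = Gm l.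
Proof.
apply/setP => x; rewrite inE; apply/andP/idP => [[xW xS] | xG].
  by apply: contraTT xS => /(V0_Gam xW)/Gam_notin_Sg; rewrite negbK.
by rewrite (Gam_sub_V0 xG) (Gam_sub_Sg xG).
Qed.

Lemma Gam_sep l p q : p \in Gm l -> q \in Gm l -> p != q -> (2 * r < d p q)%R.
Proof. by case: (Gam_indep l) => _ sep _; apply: sep. Qed.

Lemma V0_side x : x \in W -> x \in Gm (x \in G1).
Proof.
move=> xW; case xG1: (x \in G1) => //.
by apply: (V0_Gam (l := true) xW); rewrite xG1.
Qed.

Lemma adj_sym p q : adjG p q = adjG q p.
Proof.
rewrite /adj d_sym; congr (_ && _).
by case: (p \in G1); case: (p \in G2); case: (q \in G1); case: (q \in G2).
Qed.

Lemma adj_le3r p q : adjG p q -> (d p q <= 3 * r)%R.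
Proof. by case/andP. Qed.

Lemma adj_Gam l p q : adjG p q -> p \in Gm l -> q \in Gm (~~ l).
Proof.
move=> /andP[+ _]; case: l => /= /orP[] /andP[pG' qG] pG //.
- by case: (Gam_disjoint (l := true) pG pG').
- by case: (Gam_disjoint (l := true) pG' pG).
Qed.

Lemma adj_V0 p q : adjG p q -> p \in W.
Proof. by case/andP; rewrite inE => /orP[] /andP[-> _]; rewrite ?orbT. Qed.

Lemma adj_meets l p q : adjG p q -> (p \in Gm l) || (q \in Gm l).
Proof.
move=> pq; have pW := adj_V0 pq.
have [//|pG] := boolP (p \in Gm l).
by have := adj_Gam pq (V0_Gam pW pG); rewrite negbK.
Qed.

Lemma adj_no_triangle v p q : adjG v p -> adjG v q -> adjG p q -> False.
Proof.
move=> vp vq pq; have vG := V0_side (adj_V0 vp).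
exact: Gam_disjoint (adj_Gam vq vG) (adj_Gam pq (adj_Gam vp vG)).
Qed.

Lemma adj_close p q : p \in W -> q \in W -> p != q -> (d p q <= 2 * r)%R -> adjG p q.
Proof.
move=> pW qW pq close; rewrite /adj (le_trans close) ?andbT; last first.
  by rewrite ler_wpM2r ?r_ge0 ?ler_nat.
have pG := V0_side pW.
have qG : q \in Gm (~~ (p \in G1)).
  apply: (V0_Gam (l := p \in G1) qW); apply/negP => /(Gam_sep pG)/(_ pq).
  by rewrite ltNge close.
by move: pG qG; case: (p \in G1) => /= pG qG; rewrite ?pG ?qG ?orbT.
Qed.

Lemma Z_sub_V0 : Z \subset W.
Proof. by apply/subsetP => x /setIdP[]. Qed.

Lemma Z_isolated x y : x \in Z -> ~~ adjG x y.
Proof.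
case/setIdP=> xW /eqP nx0; apply/negP => xy.
have : y \in nbrG W x by rewrite in_nbr xy andbT (@adj_V0 y x) // adj_sym.
by rewrite nx0 inE.
Qed.

Lemma Z_Gam_sep l x y : x \in Z :|: Gm l -> y \in Z :|: Gm l -> x != y ->
  (2 * r < d x y)%R.
Proof.
move=> xA yA xy; rewrite ltNge; apply/negP => close.
have inW u : u \in Z :|: Gm l -> u \in W.
  by case/setUP=> [/(subsetP Z_sub_V0) | /Gam_sub_V0].
have xy_adj := adj_close (inW x xA) (inW y yA) xy close.
case/setUP: xA => [xZ | xG]; first by have := Z_isolated y xZ; rewrite xy_adj.
case/setUP: yA => [yZ | yG]; first by have := Z_isolated x yZ; rewrite adj_sym xy_adj.
exact: Gam_disjoint yG (adj_Gam xy_adj xG).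
Qed.

(** * Packing bound from an optimal solution *)

(* Each point has a centre of an optimal solution within r, and points more than
   2r apart cannot share one. *)
Lemma card_sep_le (A : {set T}) :
  (forall x y, x \in A -> y \in A -> x != y -> (2 * r < d x y)%R) -> (#|A| <= K)%N.
Proof.
move=> sepA; have [[Cs [feasCs covCs]] _] := r_opt.
pose f x := odflt x [pick c in Cs | (d x c <= r)%R].
have fP x : (f x \in Cs) && (d x (f x) <= r)%R.
  rewrite /f; case: pickP => [c /andP[-> ->] // | none].
  by have [c cC] := covCs x; move: (none c); rewrite cC => /= ->.
have f_inj : {in A &, injective f}.
  move=> x y xA yA fxy; apply/eqP/negPn/negP => xy.
  have := sepA x y xA yA xy; rewrite ltNge => /negP; apply.
  apply: le_trans (d_triangle x (f x) y) _.
  case/andP: (fP x) => _ hx; case/andP: (fP y) => _ hy.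
  by move: hx; rewrite fxy [d (f y) y]d_sym; lra.
rewrite -(card_in_imset f_inj) (leq_trans _ (fair_feasible_card feasCs)) //.
by apply: subset_leq_card; apply/subsetP => _ /imsetP[x _ ->]; case/andP: (fP x).
Qed.

Lemma card_Z_Gam_le l : (#|Z :|: Gm l| <= K)%N.
Proof. by apply: card_sep_le => x y; apply: Z_Gam_sep. Qed.

Lemma card_Gam_le l : (#|Gm l| <= K)%N.
Proof. by apply: leq_trans (card_Z_Gam_le l); rewrite subset_leq_card ?subsetUr. Qed.

Lemma card_V0_le : (#|W| <= 2 * K)%N.
Proof.
have := (leq_card_setU G1 G2).1.
by have := card_Gam_le true; have := card_Gam_le false; rewrite /V0 /=; lia.
Qed.

Lemma K_gt0 : (0 < K)%N.
Proof. by have := card_Gam_le true; have := kl_lt_card_Gam true; rewrite /=; lia. Qed.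

(** * Deletions of Phase 2 *)

Definition no_isolated (V : {set T}) : Prop :=
  forall v, v \in V -> exists2 u, u \in V & adjG v u.

Lemma two_neighbours V v : no_isolated V -> v \in V -> v \notin deg1G V ->
  exists a b, [/\ a \in V, b \in V, adjG v a, adjG v b & a != b].
Proof.
move=> noV vV vdeg; have [u uV vu] := noV v vV.
have : (1 < #|nbrG V v|)%N.
  have : (0 < #|nbrG V v|)%N by rewrite card_gt0; apply/set0Pn; exists u; rewrite in_nbr uV.
  by move: vdeg; rewrite in_deg1 vV /=; case: #|_| => [|[]].
case/card_gt1P=> a [b []]; rewrite !in_nbr => /andP[aV va] /andP[bV vb] ab.
by exists a, b.
Qed.

Lemma no_isolated_remove_edge V p q : no_isolated V -> deg1G V = set0 -> adjG p q ->
  no_isolated (V :\: [set p; q]).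
Proof.
move=> noV deg0 pq v /setDP[vV _].
have vdeg : v \notin deg1G V by rewrite deg0 inE.
have [a [b [aV bV va vb ab]]] := two_neighbours noV vV vdeg.
have [aX | aX] := boolP (a \in [set p; q]); last by exists a; rewrite // in_setD aX aV.
have [bX | bX] := boolP (b \in [set p; q]); last by exists b; rewrite // in_setD bX bV.
exfalso; move: ab va vb.
case/set2P: aX => ->; case/set2P: bX => ->; rewrite ?eqxx // => _ va vb.
- exact: adj_no_triangle va vb pq.
- by apply: adj_no_triangle va vb _; rewrite adj_sym.
Qed.

Lemma no_isolated_remove_star V i : no_isolated V -> i \in V ->
  no_isolated (V :\: (i |: N1G V i)).
Proof.
move=> noV iV v; rewrite in_setD in_setU1 negb_or => /andP[/andP[vi vN] vV].
have [w wV vw] := noV v vV.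
have [wX | wX] := boolP (w \in i |: N1G V i); last by exists w; rewrite // in_setD wX wV.
case/setU1P: wX => [wi | wN].
- subst w.
  have vdeg : v \notin deg1G V.
    by apply: contra vN => vdeg; rewrite in_N1 in_nbr vV adj_sym vw.
  have [a [b [aV bV va vb ab]]] := two_neighbours noV vV vdeg.
  have [c [cV vc ci]] : exists c, [/\ c \in V, adjG v c & c != i].
    by case: (eqVneq a i) => [ai | ai]; [exists b; rewrite -ai eq_sym | exists a].
  exists c => //; rewrite in_setD in_setU1 cV andbT negb_or ci /=.
  apply/negP; rewrite in_N1 in_nbr => /andP[/andP[_ ic] _].
  exact: adj_no_triangle vw vc ic.
- move: wN; rewrite in_N1 in_nbr in_deg1 => /andP[/andP[_ iw] /andP[_ /cards1P[t nw]]].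
  have : v \in nbrG V w by rewrite in_nbr vV adj_sym.
  have : i \in nbrG V w by rewrite in_nbr iV adj_sym.
  by rewrite nw !in_set1 => /eqP it /eqP vt; move: vi; rewrite vt -it eqxx.
Qed.

Lemma body_no_isolated C V C' V' m :
  bodyG C V C' V' m -> no_isolated V -> no_isolated V'.
Proof.
case=> {C V C' V' m} [C V p q deg0 _ _ pq | C V i _ iV _] noV.
- exact: no_isolated_remove_edge.
- exact: no_isolated_remove_star.
Qed.

Lemma N1_argmax_neq0 V i : deg1G V != set0 ->
  (forall j, j \in V -> #|N1G V j| <= #|N1G V i|)%N -> N1G V i != set0.
Proof.
case/set0Pn=> v; rewrite in_deg1 => /andP[vV /cards1P[w nv]] imax.
have : w \in nbrG V v by rewrite nv set11.
rewrite in_nbr => /andP[wV vw].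
rewrite -card_gt0 (leq_trans _ (imax w wV)) // card_gt0; apply/set0Pn; exists v.
by rewrite in_N1 in_nbr vV adj_sym vw in_deg1 vV nv cards1.
Qed.

Lemma body_spec C V C' V' m : bodyG C V C' V' m ->
  exists x X, [/\ C' = x |: C, V' = V :\: X, m = (1 + inc_edges d r G1 G2 V X)%N,
    x \in V :&: X & forall u, u \in V :&: X -> (d u x <= 3 * r)%R] /\
  forall l, exists2 w, w \in V :&: X & w \in Gm l.
Proof.
have r3 : (0 <= 3 * r)%R by have := r_ge0; lra.
case=> {C V C' V' m} [C V p q _ pV qV pq | C V i deg1V iV imax].
- exists p, [set p; q]; split; first split=> //.
  + by rewrite in_setI in_set2 eqxx pV.
  + by move=> u /setIP[_ /set2P[-> | ->]]; rewrite ?d_xx // d_sym adj_le3r.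
  + move=> l; have /orP[pG | qG] := adj_meets l pq; [exists p | exists q] => //.
    * by rewrite in_setI in_set2 eqxx pV.
    * by rewrite in_setI in_set2 eqxx qV orbT.
- have /set0Pn [u uN] := N1_argmax_neq0 deg1V imax.
  have /andP[uV iu] : (u \in V) && adjG i u by move: uN; rewrite in_N1 in_nbr => /andP[].
  exists i, (i |: N1G V i); split; first split=> //.
  + by rewrite in_setI setU11 iV.
  + move=> w /setIP[_ /setU1P[-> | wN]]; first by rewrite d_xx.
    by rewrite d_sym adj_le3r //; move: wN; rewrite in_N1 in_nbr => /andP[/andP[]].
  + move=> l; have /orP[iG | uG] := adj_meets l iu; [exists i | exists u] => //.
    * by rewrite in_setI setU11 iV.
    * by rewrite in_setI in_setU1 uN uV orbT.
Qed.

Lemma loop_room (C V : {set T}) l :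
  (#|C| + #|V :&: Gm l| <= K)%N -> ~~ ret_condG C V l -> (#|C :&: Sl (~~ l)| < kl (~~ l))%N.
Proof.
rewrite /ret_cond -ltnNge => cardl notret.
have kK : (kl l + kl (~~ l))%N = K by case: (l) => //=; rewrite addnC.
by have := card_Sg_split l C; lia.
Qed.

(* Every vertex of Gamma_(~~ l) left in V has a neighbour in V :&: Gamma_l, within 3r. *)
Lemma ret_set_eq C V l : no_isolated V -> ret_set d r G1 G2 C V l = C :|: (V :&: Gm l).
Proof.
move=> noV; apply/setP => t; rewrite [in LHS]in_setU.
have [//|_ /=] := boolP (t \in C :|: V :&: Gm l).
rewrite inE; apply/negP => /andP[/setIP[tV tG] /forall_inP far].
have [u uV tu] := noV t tV.
have uG : u \in Gm l by rewrite -[l]negbK; apply: adj_Gam tu tG.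
by have := far u; rewrite !inE uV uG orbT => /(_ isT); rewrite ltNge adj_le3r.
Qed.

Lemma ret_feasible (C V : {set T}) l : ret_condG C V l ->
  (#|C :&: Sl (~~ l)| <= kl (~~ l))%N -> fair_feasible S1 S2 k1 k2 (C :|: (V :&: Gm l)).
Proof.
move=> retl room; apply/fair_feasibleP => b.
have [-> | ->] : b = l \/ b = ~~ l by case: b; case: (l); auto.
- rewrite setIUl (leq_trans (leq_card_setU _ _).1) //; apply: leq_trans retl.
  by rewrite leq_add2l subset_leq_card ?subsetIl.
- suff VG0 : (V :&: Gm l) :&: Sl (~~ l) = set0 by rewrite setIUl VG0 setU0.
  apply/setP => x; rewrite !inE; apply/negbTE/andP => -[/andP[_ xG]].
  exact/negP/Gam_notin_Sg.
Qed.

(** * Invariants of a run *)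

Definition init_cost : nat := (#|G1| * #|G2| + #|W| + 1)%N.
Definition loop_budget : nat := (init_cost + 2 * (#|W| + 1) ^ 2)%N.

Definition phase1_inv (C P : {set T}) (n : nat) : Prop :=
  [/\ C \subset Z, P = Z :\: C & (n <= init_cost + #|C| * (#|W| + 1))%N].

(* The potential |V| (|W| + 2) pays for the remaining iterations, since deleting
   V :&: X costs at most 1 + |V :&: X| |V| (inc_edges_le). *)
Record loop_inv (C V : {set T}) (n : nat) : Prop := LoopInv {
  loop_sub : V \subset W;
  loop_no_isolated : no_isolated V;
  loop_card : forall l, (#|C| + #|V :&: Gm l| <= K)%N;
  loop_covered :
    forall x, x \in W -> x \notin V -> exists2 c, c \in C & (d x c <= 3 * r)%R;
  loop_cost : (n + #|V| * (#|W| + 2) <= loop_budget)%N }.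

Definition good_output (C : {set T}) (n : nat) : Prop :=
  [/\ fair_feasible S1 S2 k1 k2 C, (#|C| <= K)%N, covers d C (5 * r)%R
    & (n <= 30 * K ^ 2)%N].

Definition state_inv (st : astate T) : Prop :=
  match st with
  | Ph1 C P n => phase1_inv C P n
  | Ph2 C V n => loop_inv C V n /\ forall l, ~~ ret_condG C V l
  | Done C n => good_output C n
  end.

Lemma init_state_inv : state_inv (algA_init d r G1 G2).
Proof. by rewrite /=; split; rewrite ?sub0set ?setD0 // cards0 mul0n addn0. Qed.

Lemma phase1_test C P n i :
  phase1_inv C P n -> i \in P -> [forall c in C, 2 * r < d c i]%R.
Proof.
case=> CZ -> _ /setDP[iZ iC]; apply/forall_inP => c cC.
apply: (Z_Gam_sep (l := true)); rewrite ?in_setU ?iZ ?(subsetP CZ) //.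
by apply: contraNneq iC => <-.
Qed.

Lemma phase1_add C P n i : phase1_inv C P n -> i \in P ->
  phase1_inv (i |: C) (P :\ i) (n + #|C| + 1).
Proof.
case=> CZ PZ costn iP; have /setDP[iZ iC] : i \in Z :\: C by rewrite -PZ.
split.
- by rewrite subUset sub1set iZ.
- by rewrite PZ setDDl setUC.
- have := subset_leq_card (subset_trans CZ Z_sub_V0).
  by rewrite cardsU1 iC /=; lia.
Qed.

Lemma no_isolated_V0_Z : no_isolated (W :\: Z).
Proof.
move=> v /setDP[vW vZ].
have /set0Pn [u] : nbrG W v != set0 by move: vZ; rewrite inE vW.
rewrite in_nbr => /andP[uW vu]; exists u => //.
by rewrite in_setD uW andbT; apply: contraTN vu => /Z_isolated; rewrite adj_sym.
Qed.

Lemma phase1_end C n : phase1_inv C set0 n ->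
  loop_inv C (W :\: Z) (n + #|W| + 1) /\ forall l, ~~ ret_condG C (W :\: Z) l.
Proof.
case=> CZ /esym/eqP; rewrite setD_eq0 => ZC.
have {ZC CZ}-> : C = Z by apply/eqP; rewrite eqEsubset CZ ZC.
move=> costn; have ZW := Z_sub_V0.
have WZ_Gam l : (W :\: Z) :&: Gm l = Gm l :\: Z.
  by rewrite setIDAC; congr (_ :\: _); apply/setIidPr/subsetP => ?; apply: Gam_sub_V0.
split; first split.
- exact: subsetDl.
- exact: no_isolated_V0_Z.
- move=> l; rewrite WZ_Gam; have := card_Z_Gam_le l.
  by rewrite cardsU -(cardsID Z (Gm l)) setIC; lia.
- move=> x xW; rewrite in_setD xW andbT negbK => xZ.
  by exists x; rewrite // d_xx; have := r_ge0; lra.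
- move: costn; rewrite /loop_budget -mulnn -(cardsID Z W) (setIidPr ZW); nia.
- move=> l; rewrite /ret_cond -ltnNge WZ_Gam.
  have -> : Z :&: Sl l = Gm l :&: Z by rewrite -V0_Sg setIAC (setIidPr ZW).
  by rewrite cardsID kl_lt_card_Gam.
Qed.

Lemma loop_inv_body C V n C' V' m : loop_inv C V n -> bodyG C V C' V' m ->
  loop_inv C' V' (n + m + 1).
Proof.
case=> VW noV cardV covV costV bd; have noV' := body_no_isolated bd noV.
have [x [X [[eC' eV' em xVX closeX] meetX]]] := body_spec bd; subst C' V' m.
split=> //.
- exact: subset_trans (subsetDl V X) VW.
- move=> l; have [w /setIP[wV wX] wG] := meetX l.
  have : (#|(V :&: Gm l) :\: X| < #|V :&: Gm l|)%N.
    by apply: (card_setD_lt (x := w)); rewrite ?in_setI ?wV ?wG.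
  rewrite -setIDAC cardsU1; have := cardV l; have := leq_b1 (x \notin C); lia.
- move=> u uW; rewrite in_setD negb_and negbK => uVX.
  have [uV | uV] := boolP (u \in V); last first.
    by have [c cC uc] := covV u uW uV; exists c; rewrite // setU1r.
  have uX : u \in X by case/orP: uVX => //; rewrite uV.
  by exists x; rewrite ?setU11 // closeX // inE uV uX.
- have incV := inc_edges_le V X.
  have VXW : (#|V :&: X| * #|V| <= #|V :&: X| * #|W|)%N.
    by rewrite leq_mul2l subset_leq_card ?orbT.
  have VX0 : (0 < #|V :&: X|)%N by rewrite card_gt0; apply/set0Pn; exists x.
  by move: costV; rewrite -(cardsID X V); nia.
Qed.

Lemma loop_covers_V0 C V n l p : loop_inv C V n -> p \in W ->
  exists2 c, c \in C :|: (V :&: Gm l) & (d p c <= 3 * r)%R.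
Proof.
case=> _ noV _ covV _ pW.
have [pV | pV] := boolP (p \in V); last first.
  by have [c cC pc] := covV p pW pV; exists c; rewrite ?in_setU ?cC.
have [pG | pG] := boolP (p \in Gm l).
  by exists p; rewrite ?in_setU ?in_setI ?pV ?pG ?orbT // d_xx; have := r_ge0; lra.
have [u uV pu] := noV p pV.
have uG : u \in Gm l by rewrite -[l]negbK; apply: adj_Gam pu (V0_Gam pW pG).
by exists u; rewrite ?in_setU ?in_setI ?uV ?uG ?orbT ?adj_le3r.
Qed.

Lemma covers_5r (A : {set T}) :
  (forall p, p \in W -> exists2 c, c \in A & (d p c <= 3 * r)%R) -> covers d A (5 * r)%R.
Proof.
move=> covW s.
have [l sl] : exists l, s \in Sl l.
  case sS1: (s \in S1); first by exists true.
  by exists false; rewrite -(setC_Sg true) inE sS1.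
case: (Gam_indep l) => _ _ /(_ s sl) [p pG sp].
have [c cA pc] := covW p (Gam_sub_V0 pG).
by exists c => //; have := d_triangle s p c; lra.
Qed.

Lemma ret_cost C V n : loop_inv C V n -> (#|C| <= K)%N ->
  (n + #|V| * (#|C| + #|V| + 1) <= 30 * K ^ 2)%N.
Proof.
case=> /subset_leq_card VW _ _ _ costV CK.
have W2K := card_V0_le; have K1 := K_gt0.
have G12 : (#|G1| * #|G2| <= K * K)%N.
  by apply: leq_mul; [exact: card_Gam_le true | exact: card_Gam_le false].
have rest : (#|V| * (#|C| + #|V| + 1) <= 2 * K * (3 * K + 1))%N by apply: leq_mul; lia.
move: costV; rewrite /loop_budget /init_cost -!mulnn; nia.
Qed.

Lemma phase2_return C V n C' V' m l : loop_inv C V n -> (forall b, ~~ ret_condG C V b) ->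
  bodyG C V C' V' m -> ret_condG C' V' l ->
  good_output (ret_set d r G1 G2 C' V' l) (n + m + 1 + #|V'| * (#|C'| + #|V'| + 1)).
Proof.
move=> invV notret bd retl; have invV' := loop_inv_body invV bd.
have [x [X [[eC' _ _ _ _] _]]] := body_spec bd.
rewrite ret_set_eq; last exact: loop_no_isolated invV'.
have C'K : (#|C'| <= K)%N by have := loop_card invV' true; lia.
have feas : fair_feasible S1 S2 k1 k2 (C' :|: V' :&: Gm l).
  apply: ret_feasible retl _; rewrite eC'; apply: leq_trans (card_setU1I_le x C _) _.
  by rewrite addn1; apply: loop_room (loop_card invV l) (notret l).
split=> //; first exact: fair_feasible_card.
- by apply: covers_5r => p; apply: loop_covers_V0 invV'.
- exact: ret_cost invV' C'K.
Qed.

Lemma phase2_guard C V n : loop_inv C V n -> (forall l, ~~ ret_condG C V l) ->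
  (#|C| <= K)%N && (V != set0).
Proof.
move=> invV notret; have CK : (#|C| <= K)%N by have := loop_card invV true; lia.
rewrite CK; apply/negP => /eqP V0.
have := notret true; have := notret false.
rewrite /ret_cond V0 !set0I !cards0 !addn0 -!ltnNge /=.
by have := card_Sg_split true C; rewrite /=; lia.
Qed.

Lemma step_inv s t : state_inv s -> algA_step d S1 S2 k1 k2 r G1 G2 s t -> state_inv t.
Proof.
move=> + st; case: st => {s t}.
- by move=> C P n i iP _ inv; apply: phase1_add.
- by move=> C P n i iP test inv; rewrite (phase1_test inv iP) in test.
- by move=> C n; apply: phase1_end.
- by move=> C V n stop [invV notret]; rewrite (phase2_guard invV notret) in stop.
- move=> C V n C' V' m l _ _ bd retl [invV notret].
  exact: phase2_return invV notret bd retl.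
- move=> C V n C' V' m _ _ bd nret1 nret2 [invV _].
  by split=> [|[]]; first exact: loop_inv_body invV bd.
Qed.

Lemma body_exists C V : V != set0 -> no_isolated V -> exists C' V' m, bodyG C V C' V' m.
Proof.
case/set0Pn=> v vV noV.
have [deg0 | deg1V] := eqVneq (deg1G V) set0.
  by have [u uV vu] := noV v vV; do 3 eexists; apply: body_edge deg0 vV uV vu.
have [i iV imax] := @arg_maxnP _ v (mem V) (fun j => #|N1G V j|) vV.
by do 3 eexists; apply: body_deg1 deg1V iV _ => j jV; apply: imax.
Qed.

Lemma state_inv_progress st : state_inv st ->
  (exists C n, st = Done C n) \/ exists st', algA_step d S1 S2 k1 k2 r G1 G2 st st'.
Proof.
case: st => [C P n | C V n | C n] /= inv; [right | right | by left; exists C, n].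
- have [-> | /set0Pn [i iP]] := eqVneq P set0; first by eexists; apply: ph1_end.
  by eexists; apply: ph1_add iP (phase1_test inv iP).
- case: inv => invV notret; have /andP[CK V0] := phase2_guard invV notret.
  have [C' [V' [m bd]]] := body_exists C V0 (loop_no_isolated invV).
  have [retl | nret1] := boolP (ret_condG C' V' true).
    by eexists; apply: ph2_return CK V0 bd retl.
  have [retl | nret2] := boolP (ret_condG C' V' false).
    by eexists; apply: ph2_return CK V0 bd retl.
  by eexists; apply: ph2_continue CK V0 bd nret1 nret2.
Qed.

Lemma reach_state_inv s t : algA_reach (algA_step d S1 S2 k1 k2 r G1 G2) s t ->
  state_inv s -> state_inv t.
Proof. by elim=> // s0 t0 u0 st _ IH /step_inv/(_ st)/IH. Qed.

Lemma algA_runs :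
  let step := algA_step d S1 S2 k1 k2 r G1 G2 in
  let init := algA_init d r G1 G2 in
  (forall st, algA_reach step init st ->
     (exists C n, st = Done C n) \/ (exists st', step st st')) /\
  (forall C n, algA_reach step init (Done C n) -> good_output C n).
Proof.
move=> step init; split=> [st | C n] reach; have := reach_state_inv reach init_state_inv.
  exact: state_inv_progress.
exact: id.
Qed.

End AlgorithmA.

Local Open Scope ring_scope.

Theorem theorem2 :
  exists c : nat,
  forall (R : realType) (T : finType) (d : T -> T -> R)
         (S1 S2 : {set T}) (k1 k2 : nat) (r : R) (G1 G2 : {set T}),
    is_metric d ->
    S1 :&: S2 = set0 -> S1 :|: S2 = [set: T] ->
    opt_radius d S1 S2 k1 k2 r ->
    indep_center_set d (2 * r) S1 G1 ->
    indep_center_set d (2 * r) S2 G2 ->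
    (k1 < #|G1|)%N -> (k2 < #|G2|)%N ->
    let step := algA_step d S1 S2 k1 k2 r G1 G2 in
    let init := algA_init d r G1 G2 in
    (* termination: no infinite run, and no run gets stuck *)
    Acc (fun y x => step x y) init /\
    (forall st, algA_reach step init st ->
       (exists C n, st = Done C n) \/ (exists st', step st st')) /\
    (* every run's output is feasible, 5r*-covering, and took O(k^2) time *)
    (forall C n, algA_reach step init (Done C n) ->
       [/\ fair_feasible S1 S2 k1 k2 C, (#|C| <= k1 + k2)%N,
           (forall s : T, exists2 x, x \in C & d s x <= 5 * r)
         & (n <= c * (k1 + k2) ^ 2)%N]).
Proof.
exists 30%N => R T d S1 S2 k1 k2 r G1 G2 *.
by split; [exact: algA_acc | exact: algA_runs].
Qed.
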